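(* Let $P\in\mathbb C[x_1,\dots,x_4,y_1,\dots,y_6]$ not depend on $y_3$, write $P=\sum_{i\ge0}y_1^iP_i$ with each $P_i$ independent of $y_1$, and suppose $\mathbf DP=\mathbf D_1P=\mathbf D_2P=\mathbf D_3P=\mathbf D_4P=0$, where $\mathbf D=\partial_{y_4}\partial_{y_3}-\partial_{y_5}\partial_{y_2}+\partial_{y_6}\partial_{y_1}$, $\mathbf D_1=\partial_{y_6}\partial_{x_4}-\partial_{y_2}\partial_{x_3}+\partial_{y_3}\partial_{x_2}$, $\mathbf D_2=\partial_{y_5}\partial_{x_4}-\partial_{y_1}\partial_{x_3}+\partial_{y_3}\partial_{x_1}$, $\mathbf D_3=\partial_{y_4}\partial_{x_4}-\partial_{y_1}\partial_{x_2}+\partial_{y_2}\partial_{x_1}$, $\mathbf D_4=\partial_{y_4}\partial_{x_3}-\partial_{y_5}\partial_{x_2}+\partial_{y_6}\partial_{x_1}$. Then there exists $K\in\mathbb C[x_1,\dots,x_4,y_1,\dots,y_6]$ depending neither on $y_1$ nor on $y_3$ such that $\mathbf DK=-\partial_{y_6}P_0$, $\mathbf D_1K=0$, $\mathbf D_2K=\partial_{x_3}P_0$, $\mathbf D_3K=\partial_{x_2}P_0$ and $\mathbf D_4K=0$. *)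

From HB Require Import structures.
From mathcomp Require Import all_boot all_order all_algebra.
From mathcomp Require Import Rstruct complex.
From mathcomp Require Import mpoly.
Set Implicit Arguments. Unset Strict Implicit. Unset Printing Implicit Defensive.
Import GRing.Theory Num.Theory.
Local Open Scope ring_scope.

Definition C : Type := (Rdefinitions.R)[i].
Definition CF : fieldType := (Rdefinitions.R)[i].

(* Polynomial ring C[x1..x4, y1..y6]; variables indexed by 'I_10:
   x_k (k=1..4) is index k-1, y_k (k=1..6) is index k+3. *)
Definition Pol := {mpoly CF[10]}.
Definition vx (k : nat) : 'I_10 := inord k.-1.
Definition vy (k : nat) : 'I_10 := inord (k + 3).

Definition pd (v : 'I_10) (p : Pol) : Pol := mderiv v p.

Definition indep (v : 'I_10) (p : Pol) : Prop :=
  forall m : 'X_{1..10}, m \in msupp p -> m v = 0%N.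

Definition opD (p : Pol) : Pol :=
  pd (vy 4) (pd (vy 3) p) - pd (vy 5) (pd (vy 2) p) + pd (vy 6) (pd (vy 1) p).
Definition opD1 (p : Pol) : Pol :=
  pd (vy 6) (pd (vx 4) p) - pd (vy 2) (pd (vx 3) p) + pd (vy 3) (pd (vx 2) p).
Definition opD2 (p : Pol) : Pol :=
  pd (vy 5) (pd (vx 4) p) - pd (vy 1) (pd (vx 3) p) + pd (vy 3) (pd (vx 1) p).
Definition opD3 (p : Pol) : Pol :=
  pd (vy 4) (pd (vx 4) p) - pd (vy 1) (pd (vx 2) p) + pd (vy 2) (pd (vx 1) p).
Definition opD4 (p : Pol) : Pol :=
  pd (vy 4) (pd (vx 3) p) - pd (vy 5) (pd (vx 2) p) + pd (vy 6) (pd (vx 1) p).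

From HB Require Import structures.
From mathcomp Require Import all_boot all_order all_algebra.
From mathcomp Require Import Rstruct complex.
From mathcomp Require Import mpoly.
Import GRing.Theory Num.Theory.
Local Open Scope ring_scope.

(* Taking the part of a polynomial that does not involve y1
   (setting y1 := 0) commutes with every operator free of d/dy1; hence P_0
   does not involve y3 and satisfies D1 P_0 = D4 P_0 = 0.  For K free of y1
   and y3 the five required equations reduce to
     d_y5 d_y2 K = d_y6 P_0,  d_y6 d_x4 K = d_y2 d_x3 K,  d_y5 d_x4 K = d_x3 P_0,
     d_y4 d_x4 K + d_y2 d_x1 K = d_x2 P_0,  D4 K = 0,
   and any solution of these can afterwards be projected onto its y1-, y3-free
   part.  We take K = (antiderivative in y5 of X) + Z.  Here X is a potential
   of (d_x3 P_0, d_y6 P_0) in the variables (x4, y2), which exists because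
   D1 P_0 = 0, corrected so that D4 X = 0: D4 is onto, being d_y5 d_x2 plus an
   operator that is nilpotent and commutes with the antiderivatives in y5 and
   x2.  Then Z, free of y5, solves the remaining second-order system with the
   y5-free parts of d_x2 P_0 and d_x2 X as right-hand sides; that system is
   solved by induction on the degree, integrating in y4 and then in x1. *)

Lemma add_nilpotent_surj {V : zmodType} {N : V -> V} :
  (forall x y, N (x - y) = N x - N y) ->
  forall k x, iter k N x = 0 -> exists y, y + N y = x.
Proof.
move=> NB k; have N0 : N 0 = 0 by move: (NB 0 0); rewrite !subrr.
elim: k => [|k IH] x; first by move=> /= ->; exists 0; rewrite N0 addr0.
rewrite iterSr => /IH [y yE]; exists (x - y).
by rewrite NB -yE addrK subrK.
Qed.

Definition mantideriv {n} {R : fieldType} (v : 'I_n) (p : {mpoly R[n]}) :=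
  \sum_(m <- msupp p) ((m v).+1%:R^-1 * p@_m) *: 'X_[m + U_(v)].

(* The part of [p] not involving [x_v], i.e. [p] at [x_v = 0]; locked, as
   otherwise additive rewrite rules match it as the difference [p - _]. *)
HB.lock Definition mconst {n} {R : fieldType} (v : 'I_n) (p : {mpoly R[n]}) :=
  p - mantideriv v p^`M(v).

Section Antiderivative.
Context {n : nat} {R : numFieldType}.
Implicit Types (u v w : 'I_n) (m : 'X_{1..n}) (p q : {mpoly R[n]}).

Lemma lem1E m v : (U_(v) <= m)%MM = (0 < m v)%N.
Proof.
apply/mnm_lepP/idP => [/(_ v)|mv i]; rewrite mnm1E ?eqxx //.
by case: eqP => // <-.
Qed.

Lemma mcoeff_mantideriv v p m : (mantideriv v p)@_m =
  if m v is k.+1 then k.+1%:R^-1 * p@_(m - U_(v)) else 0.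
Proof.
rewrite /mantideriv raddf_sum /=.
under eq_bigr => m' _ do rewrite mcoeffZ mcoeffX.
case mv: (m v) => [|k].
  apply: big1 => m' _; suff /negbTE-> : (m' + U_(v))%MM != m by rewrite mulr0.
  by apply: contra_eqN mv => /eqP <-; rewrite mnmDE mnm1E eqxx addn1.
rewrite -{1}(@submK _ U_(v) m) ?lem1E ?mv //.
set m0 := (m - U_(v))%MM; have m0v : m0 v = k by rewrite mnmBE mnm1E eqxx mv subn1.
under eq_bigr => m' _ do rewrite eqm_add2r.
have [m0p|m0p] := boolP (m0 \in msupp p).
  rewrite (bigD1_seq m0) ?msupp_uniq //= eqxx mulr1 m0v big1 ?addr0 //.
  by move=> m' /negbTE->; rewrite mulr0.
rewrite memN_msupp_eq0 // mulr0 big1_seq // => m' m'p.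
by rewrite (_ : (m' == m0) = false) ?mulr0 //; apply: contraNF m0p => /eqP <-.
Qed.

Lemma mantideriv_is_linear v : linear (@mantideriv n R v).
Proof.
move=> c p q; apply/mpolyP => m.
rewrite mcoeffD mcoeffZ !mcoeff_mantideriv mcoeffD mcoeffZ.
by case: (m v) => [|k]; rewrite ?mulr0 ?addr0 // mulrDr mulrCA.
Qed.

HB.instance Definition _ v := GRing.isLinear.Build R {mpoly R[n]} {mpoly R[n]} _
  (@mantideriv n R v) (mantideriv_is_linear v).

Lemma mantiderivK v : cancel (@mantideriv n R v) (mderiv v).
Proof.
move=> p; apply/mpolyP => m.
rewrite mcoeff_mderiv mcoeff_mantideriv mnmDE mnm1E eqxx addn1 addmK.
by rewrite -mulrnAl -mulr_natr mulVf ?pnatr_eq0 ?mul1r.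
Qed.

Lemma mderiv_mantideriv u v p : u != v ->
  (mantideriv v p)^`M(u) = mantideriv v p^`M(u).
Proof.
move=> uv; apply/mpolyP => m.
rewrite mcoeff_mderiv !mcoeff_mantideriv mnmDE mnm1E (negbTE uv) addn0.
case mv: (m v) => [|k]; rewrite ?mul0rn // mcoeff_mderiv -mulrnAr.
rewrite mnmBE mnm1E eq_sym (negbTE uv) subn0 [(m - _ + _)%MM]addmC addmBA.
  by rewrite [(U_(u) + m)%MM]addmC.
by rewrite lem1E mv.
Qed.

Lemma mconstE v p : mconst v p = p - mantideriv v p^`M(v).
Proof. by rewrite mconst.unlock. Qed.

Lemma mconst_is_linear v : linear (@mconst n R v).
Proof. by move=> c p q; rewrite !mconstE !linearP /= scalerBr addrACA scalerN. Qed.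

HB.instance Definition _ v := GRing.isLinear.Build R {mpoly R[n]} {mpoly R[n]} _
  (@mconst n R v) (mconst_is_linear v).

Lemma mantideriv_mderiv v p : mantideriv v p^`M(v) = p - mconst v p.
Proof. by rewrite mconstE opprB addrC subrK. Qed.

Lemma mderiv_mconst_eq0 v p : (mconst v p)^`M(v) = 0.
Proof. by rewrite mconstE raddfB /= mantiderivK subrr. Qed.

Lemma mderiv_mconst u v p : u != v -> (mconst v p)^`M(u) = mconst v p^`M(u).
Proof. by move=> uv; rewrite !mconstE raddfB /= mderiv_mantideriv // mderiv_comm. Qed.

Lemma mconst_id v p : p^`M(v) = 0 -> mconst v p = p.
Proof. by move=> pv; rewrite mconstE pv raddf0 subr0. Qed.

Lemma mconst_idem v p : mconst v (mconst v p) = mconst v p.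
Proof. exact/mconst_id/mderiv_mconst_eq0. Qed.

Lemma mcoeff_mconst v p m : (mconst v p)@_m = if m v == 0%N then p@_m else 0.
Proof.
rewrite mconstE mcoeffB mcoeff_mantideriv; case mv: (m v) => [|k].
  by rewrite subr0.
rewrite mcoeff_mderiv submK ?lem1E ?mv // mnmBE mnm1E eqxx mv subn1.
by rewrite /= -[p@_m *+ _]mulr_natl mulKf ?pnatr_eq0 ?subrr.
Qed.

Lemma mconst_mulX v p : mconst v ('X_v * p) = 0.
Proof.
apply/mpolyP => m; rewrite mcoeff_mconst mcoeff0; case: eqP => // mv.
apply: memN_msupp_eq0; rewrite mulrC (perm_mem (msuppMX _ _)).
by apply/mapP => -[m' _ mE]; move: mv; rewrite mE mnmDE mnm1E eqxx.
Qed.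

Lemma mconst_sum_mulX v N (F : nat -> {mpoly R[n]}) :
  (forall i, (F i)^`M(v) = 0) ->
  mconst v (\sum_(i < N.+1) 'X_v ^+ i * F i) = F 0%N.
Proof.
move=> Fv; rewrite big_ord_recl /= expr0 mul1r raddfD /= mconst_id ?Fv //.
rewrite raddf_sum /= big1 ?addr0 // => i _.
by rewrite exprS -mulrA mconst_mulX.
Qed.

Lemma poincare2 u v (F1 F2 : {mpoly R[n]}) : u != v -> F2^`M(u) = F1^`M(v) ->
  exists Y, Y^`M(u) = F1 /\ Y^`M(v) = F2.
Proof.
move=> uv F12; exists (mantideriv u F1 + mconst u (mantideriv v F2)).
split; rewrite raddfD /=.
  by rewrite mantiderivK mderiv_mconst_eq0 addr0.
rewrite mderiv_mantideriv 1?eq_sym // mderiv_mconst 1?eq_sym //.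
by rewrite mantiderivK -F12 mantideriv_mderiv subrK.
Qed.

Lemma msize_mderiv v p : (msize p^`M(v) <= (msize p).-1)%N.
Proof.
rewrite msizeE; apply/bigmax_leqP_seq => m.
rewrite mcoeff_msupp mcoeff_mderiv => pm _.
have : (m + U_(v))%MM \in msupp p.
  by rewrite mcoeff_msupp; apply: contraNneq pm => ->; rewrite mul0rn.
by move/msize_mdeg_lt; rewrite mdegD mdeg1 addn1 ltn_predRL.
Qed.

Lemma msize_mderiv2 u v p : (msize p^`M(v)^`M(u) <= (msize p).-1)%N.
Proof.
exact: leq_trans (msize_mderiv _ _) (leq_trans (leq_pred _) (msize_mderiv _ _)).
Qed.

(* The solution is [T_u (T_v U)], [T] the antiderivatives, where
   [U + T_u (T_v (L U)) = f]; [T_u T_v L] is nilpotent on [f], since [L]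
   commutes with the [T]'s and lowers the degree. *)
Lemma mderiv2_add_surj u v (L : {mpoly R[n]} -> {mpoly R[n]}) : u != v ->
  (forall p q, L (p - q) = L p - L q) ->
  (forall p, L (mantideriv u p) = mantideriv u (L p)) ->
  (forall p, L (mantideriv v p) = mantideriv v (L p)) ->
  (forall p, msize (L p) <= (msize p).-1)%N ->
  forall f, exists q, q^`M(v)^`M(u) + L q = f.
Proof.
move=> uv LB LTu LTv Lsize f.
pose N p := mantideriv u (mantideriv v (L p)).
have iterLf : iter (msize f) L f = 0.
  suff /(_ (msize f)) : forall k, (msize (iter k L f) <= msize f - k)%N.
    by rewrite subnn leqn0 msize_poly_eq0 => /eqP.
  elim=> [|k IH]; rewrite ?subn0 //= subnS (leq_trans (Lsize _)) //.
  by rewrite -!subn1 leq_sub2r.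
have LTT k p : iter k L (mantideriv u (mantideriv v p)) =
    mantideriv u (mantideriv v (iter k L p)).
  by elim: k => //= k ->; rewrite LTu LTv.
have iterN k p : iter k L p = 0 -> iter k N p = 0.
  elim: k p => [//|k IH] p Lp; rewrite iterSr; apply: IH.
  by rewrite /N LTT -iterSr Lp !raddf0.
have NB p q : N (p - q) = N p - N q by rewrite /N LB !raddfB.
have [U UE] := add_nilpotent_surj NB _ _ (iterN _ _ iterLf).
exists (mantideriv u (mantideriv v U)).
by rewrite mderiv_mantideriv 1?eq_sym // !mantiderivK LTu LTv.
Qed.

Section MinorSystem.
Variables a b r1 r2 p1 p2 : 'I_n.
Hypotheses (ab : a != b) (r1a : r1 != a) (r1b : r1 != b) (r2a : r2 != a)
  (r2b : r2 != b) (p1a : p1 != a) (p1b : p1 != b) (p2a : p2 != a)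
  (p2b : p2 != b) (r2p2 : r2 != p2).
Local Hint Extern 0 (is_true (_ != _)) => (rewrite eq_sym; assumption) : core.

Lemma minor_system_lift {r r'} {G Y Y' : {mpoly R[n]}} :
  r != a -> r != b -> r' != a ->
  Y^`M(r)^`M(a) + Y^`M(b)^`M(r') = G^`M(a) ->
  Y'^`M(r') = mconst a (G - Y^`M(r)) -> Y'^`M(a) = 0 ->
  (mantideriv a Y + mantideriv b Y')^`M(r)^`M(a) +
  (mantideriv a Y + mantideriv b Y')^`M(b)^`M(r') = G.
Proof.
move=> ra rb r'a YG Y'r' Y'a.
rewrite !raddfD /= (mderiv_mantideriv _ _ _ ra) !mantiderivK !mderiv_mantideriv //.
rewrite mderiv_comm Y'a !raddf0 addr0 Y'r'.
rewrite -[Y^`M(b)^`M(r')](addKr (Y^`M(r)^`M(a))) YG.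
by rewrite [- _ + _]addrC -raddfB mantideriv_mderiv subrK addrC subrK.
Qed.

(* [Y] solves the system for the [a]-derivatives of [G] and [H]; integrating it
   in [a] leaves an [a]-free defect, which is a gradient in [(r2, p2)] and is
   integrated in [b]. *)
Lemma minor_system_solvable_le k (G H : {mpoly R[n]}) :
  (msize G <= k)%N -> (msize H <= k)%N ->
  H^`M(r1) = G^`M(p1) -> H^`M(r2) = G^`M(p2) ->
  exists Z, [/\ Z^`M(r1)^`M(p2) = Z^`M(p1)^`M(r2),
    Z^`M(r1)^`M(a) + Z^`M(b)^`M(r2) = G & Z^`M(p1)^`M(a) + Z^`M(b)^`M(p2) = H].
Proof.
elim: k G H => [|k IH] G H.
  rewrite !leqn0 !msize_poly_eq0 => /eqP-> /eqP-> _ _.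
  by exists 0; rewrite !mderiv0 addr0.
move=> Gk Hk HG1 HG2.
have msize_mderiv_le (F : {mpoly R[n]}) v :
    (msize F <= k.+1)%N -> (msize F^`M(v) <= k)%N.
  move=> Fk; apply: leq_trans (msize_mderiv _ _) _.
  by rewrite -subn1 leq_subLR add1n.
have HG1' : H^`M(a)^`M(r1) = G^`M(a)^`M(p1).
  by rewrite mderiv_comm HG1 mderiv_comm.
have HG2' : H^`M(a)^`M(r2) = G^`M(a)^`M(p2).
  by rewrite mderiv_comm HG2 mderiv_comm.
have [Y [Ym YG YH]] :=
  IH _ _ (msize_mderiv_le _ a Gk) (msize_mderiv_le _ a Hk) HG1' HG2'.
set G' := mconst a (G - Y^`M(r1)); set H' := mconst a (H - Y^`M(p1)).
have [Y'' [Y''G Y''H]] : exists Y'', Y''^`M(r2) = G' /\ Y''^`M(p2) = H'.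
  by apply: poincare2 => //; rewrite !mderiv_mconst // !raddfB /= HG2 Ym.
have Y'G : (mconst a Y'')^`M(r2) = G' by rewrite mderiv_mconst // Y''G mconst_idem.
have Y'H : (mconst a Y'')^`M(p2) = H' by rewrite mderiv_mconst // Y''H mconst_idem.
exists (mantideriv a Y + mantideriv b (mconst a Y'')); split.
- rewrite !raddfD /= !mderiv_mantideriv // Ym; congr (_ + mantideriv b _).
  rewrite mderiv_comm [X in _ = X]mderiv_comm Y'G Y'H !mderiv_mconst //.
  by rewrite !raddfB /= HG1 mderiv_comm.
- exact: minor_system_lift r1a r1b r2a YG Y'G (mderiv_mconst_eq0 _ _).
- exact: minor_system_lift p1a p1b p2a YH Y'H (mderiv_mconst_eq0 _ _).
Qed.

Lemma minor_system_solvable (G H : {mpoly R[n]}) :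
  H^`M(r1) = G^`M(p1) -> H^`M(r2) = G^`M(p2) ->
  exists Z, [/\ Z^`M(r1)^`M(p2) = Z^`M(p1)^`M(r2),
    Z^`M(r1)^`M(a) + Z^`M(b)^`M(r2) = G & Z^`M(p1)^`M(a) + Z^`M(b)^`M(p2) = H].
Proof. exact: minor_system_solvable_le (leq_maxl _ _) (leq_maxr _ _). Qed.

End MinorSystem.

End Antiderivative.

Local Notation x1 := (vx 1).
Local Notation x2 := (vx 2).
Local Notation x3 := (vx 3).
Local Notation x4 := (vx 4).
Local Notation y1 := (vy 1).
Local Notation y2 := (vy 2).
Local Notation y3 := (vy 3).
Local Notation y4 := (vy 4).
Local Notation y5 := (vy 5).
Local Notation y6 := (vy 6).

(* [vx i != vy j] does not compute, since [inord] goes through the opaque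
   [idP].  Side conditions of rewrite rules are discharged with [try vneq]
   rather than [//]: a failing [done] on the remaining polynomial identities
   takes very long. *)
Local Ltac vneq := first [assumption | by rewrite -val_eqE /= !inordK].
Local Hint Extern 0 (is_true (_ != _)) => vneq : core.

Lemma opD4D (p q : Pol) : opD4 (p + q) = opD4 p + opD4 q.
Proof.
have addrBDA (V : zmodType) (a a' b b' c c' : V) :
  a + a' - (b + b') + (c + c') = a - b + c + (a' - b' + c').
  by rewrite opprD [a + a' + _]addrACA [RHS]addrACA.
by rewrite /opD4 /pd !mderivD; apply: addrBDA.
Qed.

Lemma opD4_eq0 (F : Pol) :
  opD4 F = 0 -> F^`M(x3)^`M(y4) + F^`M(x1)^`M(y6) = F^`M(x2)^`M(y5).
Proof. by move=> FD4; apply/subr0_eq; rewrite -FD4 /opD4 /pd addrAC. Qed.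

Lemma mderiv_opD4 w (p : Pol) : (opD4 p)^`M(w) = opD4 p^`M(w).
Proof. by rewrite /opD4 /pd !raddfD !raddfN /= !(mderiv_comm _ w). Qed.

Lemma opD4_mconst w (p : Pol) : y4 != w -> x3 != w -> y5 != w -> x2 != w ->
  y6 != w -> x1 != w -> opD4 (mconst w p) = mconst w (opD4 p).
Proof. by move=> *; rewrite /opD4 /pd !raddfD !raddfN /= !mderiv_mconst. Qed.

Lemma opD1_mconst w (p : Pol) : y6 != w -> x4 != w -> y2 != w -> x3 != w ->
  y3 != w -> x2 != w -> opD1 (mconst w p) = mconst w (opD1 p).
Proof. by move=> *; rewrite /opD1 /pd !raddfD !raddfN /= !mderiv_mconst. Qed.

Lemma opD4_mantideriv (X : Pol) : opD4 (mantideriv y5 X) =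
  mantideriv y5 (X^`M(x3)^`M(y4) + X^`M(x1)^`M(y6)) - X^`M(x2).
Proof.
have x2y5 : x2 != y5 by vneq.
rewrite /opD4 /pd (mderiv_mantideriv _ _ _ x2y5) mantiderivK.
by rewrite !mderiv_mantideriv; try vneq; rewrite raddfD addrAC.
Qed.

Lemma opD4_surj (f : Pol) : exists q, opD4 q = f.
Proof.
pose L (q : Pol) := - (q^`M(x3)^`M(y4) + q^`M(x1)^`M(y6)).
have LB p q : L (p - q) = L p - L q.
  by rewrite /L !raddfB /= addrACA -opprD opprB opprK [RHS]addrC.
have LT w p : y4 != w -> x3 != w -> y6 != w -> x1 != w ->
    L (mantideriv w p) = mantideriv w (L p).
  by move=> *; rewrite /L !mderiv_mantideriv; try vneq; rewrite -raddfD -raddfN.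
have Lsize p : (msize (L p) <= (msize p).-1)%N.
  rewrite msizeN; apply: leq_trans (msizeD_le _ _) _.
  by rewrite geq_max !msize_mderiv2.
have [q qE] : exists q, q^`M(x2)^`M(y5) + L q = - f.
  by apply: (mderiv2_add_surj _ _ _ _ LB _ _ Lsize) => [|p|p]; try apply: LT.
by exists q; apply: oppr_inj; rewrite -qE /opD4 /pd /L opprD opprB -addrA -opprD.
Qed.

Lemma D4_potential (P0 : Pol) :
  P0^`M(x4)^`M(y6) = P0^`M(x3)^`M(y2) -> opD4 P0 = 0 ->
  exists X, [/\ X^`M(x4) = P0^`M(x3), X^`M(y2) = P0^`M(y6) & opD4 X = 0].
Proof.
move=> P0c P0D4.
have P0c' : P0^`M(y6)^`M(x4) = P0^`M(x3)^`M(y2) by rewrite mderiv_comm.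
have [//|Q [Q4 Q2]] := poincare2 x4 y2 _ _ _ P0c'.
have [q qE] := opD4_surj (- opD4 Q).
have DQ w v : Q^`M(w) = P0^`M(v) -> mconst w (opD4 Q) = opD4 Q.
  by move=> Qw; apply: mconst_id; rewrite mderiv_opD4 Qw -mderiv_opD4 P0D4 raddf0.
exists (Q + mconst x4 (mconst y2 q)); split.
- by rewrite raddfD /= mderiv_mconst_eq0 addr0 Q4.
- rewrite raddfD /= mderiv_mconst; try vneq.
  by rewrite mderiv_mconst_eq0 raddf0 addr0 Q2.
- rewrite opD4D !opD4_mconst; try vneq.
  by rewrite qE !raddfN /= (DQ _ _ Q2) (DQ _ _ Q4) subrr.
Qed.

Lemma D4_correction (P0 X : Pol) :
  X^`M(x4) = P0^`M(x3) -> X^`M(y2) = P0^`M(y6) ->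
  exists Z, [/\ Z^`M(y5) = 0, Z^`M(x4)^`M(y6) = Z^`M(x3)^`M(y2),
    Z^`M(x4)^`M(y4) + Z^`M(x1)^`M(y2) = mconst y5 P0^`M(x2)
  & Z^`M(x3)^`M(y4) + Z^`M(x1)^`M(y6) = mconst y5 X^`M(x2)].
Proof.
move=> X4 X2; set G := mconst y5 P0^`M(x2); set H := mconst y5 X^`M(x2).
have HG1 : H^`M(x4) = G^`M(x3).
  by rewrite !mderiv_mconst; try vneq; rewrite mderiv_comm X4 mderiv_comm.
have HG2 : H^`M(y2) = G^`M(y6).
  by rewrite !mderiv_mconst; try vneq; rewrite mderiv_comm X2 mderiv_comm.
have [Z [Zm ZG ZH]] : exists Z : Pol, [/\ Z^`M(x4)^`M(y6) = Z^`M(x3)^`M(y2),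
    Z^`M(x4)^`M(y4) + Z^`M(x1)^`M(y2) = G & Z^`M(x3)^`M(y4) + Z^`M(x1)^`M(y6) = H].
  by apply: minor_system_solvable.
exists (mconst y5 Z); split.
- exact: mderiv_mconst_eq0.
- by rewrite !mderiv_mconst; try vneq; rewrite Zm.
- by rewrite !mderiv_mconst; try vneq; rewrite -raddfD /= ZG /G mconst_idem.
- by rewrite !mderiv_mconst; try vneq; rewrite -raddfD /= ZH /H mconst_idem.
Qed.

(* The equations of the theorem, written for a [K] not involving [y1], [y3]. *)
Definition reduced_system (P0 K : Pol) : Prop :=
  [/\ K^`M(y2)^`M(y5) = P0^`M(y6), K^`M(x4)^`M(y6) = K^`M(x3)^`M(y2),
      K^`M(x4)^`M(y5) = P0^`M(x3),
      K^`M(x4)^`M(y4) + K^`M(x1)^`M(y2) = P0^`M(x2) & opD4 K = 0].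

Lemma reduced_system_solvable (P0 : Pol) :
  P0^`M(x4)^`M(y6) = P0^`M(x3)^`M(y2) -> opD4 P0 = 0 ->
  exists K, reduced_system P0 K.
Proof.
move=> P0c P0D4.
have [X [X4 X2 XD4]] := D4_potential _ P0c P0D4.
have [Z [Z5 Zm ZG ZH]] := D4_correction _ _ X4 X2.
have Z5' u : Z^`M(u)^`M(y5) = 0 by rewrite mderiv_comm Z5 raddf0.
exists (mantideriv y5 X + Z); split.
- rewrite !raddfD /= mderiv_mantideriv; try vneq.
  by rewrite mantiderivK X2 Z5' addr0.
- rewrite !raddfD /= !mderiv_mantideriv; try vneq.
  by rewrite Zm X4 [X^`M(x3)^`M(y2)]mderiv_comm X2 [P0^`M(y6)^`M(x3)]mderiv_comm.
- rewrite !raddfD /= mderiv_mantideriv; try vneq.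
  by rewrite mantiderivK X4 Z5' addr0.
- rewrite !raddfD /= !mderiv_mantideriv; try vneq.
  rewrite addrACA ZG -raddfD /= X4 [X^`M(x1)^`M(y2)]mderiv_comm X2.
  by rewrite [P0^`M(y6)^`M(x1)]mderiv_comm opD4_eq0 ?mantideriv_mderiv ?subrK.
- have ZD4 : opD4 Z = mconst y5 X^`M(x2) by rewrite -ZH /opD4 /pd Z5' subr0.
  rewrite opD4D opD4_mantideriv (opD4_eq0 _ XD4) mantideriv_mderiv ZD4.
  by rewrite addrAC subrK subrr.
Qed.

Lemma reduced_system_mconst (P0 K : Pol) : P0^`M(y1) = 0 -> P0^`M(y3) = 0 ->
  reduced_system P0 K -> reduced_system P0 (mconst y1 (mconst y3 K)).
Proof.
move=> P01 P03 [K1 K2 K3 K4 K5].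
have P0u w u : P0^`M(w) = 0 -> P0^`M(u)^`M(w) = 0.
  by move=> P0w; rewrite mderiv_comm P0w raddf0.
have E13 u : mconst y1 (mconst y3 P0^`M(u)) = P0^`M(u).
  by rewrite (mconst_id _ _ (P0u _ u P03)) (mconst_id _ _ (P0u _ u P01)).
split.
- by rewrite !mderiv_mconst; try vneq; rewrite K1 E13.
- by rewrite !mderiv_mconst; try vneq; rewrite K2.
- by rewrite !mderiv_mconst; try vneq; rewrite K3 E13.
- by rewrite !mderiv_mconst; try vneq; rewrite -!raddfD /= K4 E13.
- by rewrite !opD4_mconst; try vneq; rewrite K5 !raddf0.
Qed.

Lemma reduced_system_free_solvable (P0 : Pol) :
  P0^`M(y1) = 0 -> P0^`M(y3) = 0 ->
  P0^`M(x4)^`M(y6) = P0^`M(x3)^`M(y2) -> opD4 P0 = 0 ->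
  exists K, [/\ K^`M(y1) = 0, K^`M(y3) = 0 & reduced_system P0 K].
Proof.
move=> P01 P03 P0c P0D4; have [K Ksys] := reduced_system_solvable _ P0c P0D4.
exists (mconst y1 (mconst y3 K)); split.
- exact: mderiv_mconst_eq0.
- by rewrite mderiv_mconst; try vneq; rewrite mderiv_mconst_eq0 raddf0.
- exact: reduced_system_mconst.
Qed.

Lemma reduced_system_opD (P0 K : Pol) : K^`M(y1) = 0 -> K^`M(y3) = 0 ->
  reduced_system P0 K ->
  [/\ opD K = - P0^`M(y6), opD1 K = 0, opD2 K = P0^`M(x3),
      opD3 K = P0^`M(x2) & opD4 K = 0].
Proof.
move=> K1 K3 [Ka Kb Kc Kd Ke].
have K1' u : K^`M(u)^`M(y1) = 0 by rewrite mderiv_comm K1 raddf0.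
have K3' u : K^`M(u)^`M(y3) = 0 by rewrite mderiv_comm K3 raddf0.
rewrite /opD /opD1 /opD2 /opD3 /pd; split; last exact: Ke.
- by rewrite K3 K1 !raddf0 Ka sub0r addr0.
- by rewrite K3' Kb subrr addr0.
- by rewrite K1' K3' Kc subr0 addr0.
- by rewrite K1' subr0 Kd.
Qed.

Lemma coefficient0_system (P : Pol) N (Pi : nat -> Pol) :
  P^`M(y3) = 0 -> P = \sum_(i < N.+1) 'X_y1 ^+ i * Pi i ->
  (forall i, (Pi i)^`M(y1) = 0) -> opD1 P = 0 -> opD4 P = 0 ->
  [/\ (Pi 0%N)^`M(y1) = 0, (Pi 0%N)^`M(y3) = 0,
      (Pi 0%N)^`M(x4)^`M(y6) = (Pi 0%N)^`M(x3)^`M(y2) & opD4 (Pi 0%N) = 0].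
Proof.
move=> P3 PE Pi1 D1P D4P.
have P0E : mconst y1 P = Pi 0%N by rewrite PE mconst_sum_mulX.
have P03 : (Pi 0%N)^`M(y3) = 0.
  by rewrite -P0E mderiv_mconst; try vneq; rewrite P3 raddf0.
split; [exact: Pi1 | exact: P03 | |].
- apply/subr0_eq; have : opD1 (Pi 0%N) = 0.
    by rewrite -P0E opD1_mconst; try vneq; rewrite D1P raddf0.
  by rewrite /opD1 /pd [_^`M(x2)^`M(y3)]mderiv_comm P03 raddf0 addr0.
- by rewrite -P0E opD4_mconst; try vneq; rewrite D4P raddf0.
Qed.

Lemma indep_mderiv v (p : Pol) : indep v p <-> p^`M(v) = 0.
Proof.
split=> [ind | pv m].
  apply/mpolyP => m; rewrite mcoeff_mderiv mcoeff0 memN_msupp_eq0 ?mul0rn //.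
  by apply/negP => /ind; rewrite mnmDE mnm1E eqxx addn1.
rewrite -(mconst_id _ _ pv) mcoeff_msupp mcoeff_mconst.
by case: (m v =P 0%N) => // _; rewrite eqxx.
Qed.

Theorem mainTheorem9 (P : Pol) (N : nat) (Pi : nat -> Pol) :
  indep (vy 3) P ->
  P = \sum_(i < N.+1) 'X_(vy 1) ^+ i * Pi i ->
  (forall i, indep (vy 1) (Pi i)) ->
  opD P = 0 -> opD1 P = 0 -> opD2 P = 0 -> opD3 P = 0 -> opD4 P = 0 ->
  exists K : Pol,
    indep (vy 1) K /\ indep (vy 3) K /\
    opD K = - pd (vy 6) (Pi 0%N) /\ opD1 K = 0 /\
    opD2 K = pd (vx 3) (Pi 0%N) /\
    opD3 K = pd (vx 2) (Pi 0%N) /\ opD4 K = 0.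
Proof.
move=> /indep_mderiv P3 PE Pi1 _ D1P _ _ D4P.
have Pi1' i : (Pi i)^`M(y1) = 0 by apply/indep_mderiv.
have [P01 P03 P0c P0D4] := coefficient0_system _ _ _ P3 PE Pi1' D1P D4P.
have [K [K1 K3 Ksys]] := reduced_system_free_solvable _ P01 P03 P0c P0D4.
exists K; rewrite !indep_mderiv.
by case: (reduced_system_opD _ _ K1 K3 Ksys) => *; do !split.
Qed.
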